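(* Let $(\Sigma,\mathsf{ar})$ be an at most countable binding signature with associated $F,F_\alpha$, $a^{(n)}$, final $F_\alpha$-coalgebra $T_\alpha$, and maps $[-]_\alpha=g:\lim_n UF^n1\to\lim_n UF_\alpha^n1$ and $\iota_\alpha:UT_\alpha\to\lim_n UF_\alpha^n1$ as below. Identify $\lim_n UF^n1$ with $T_\Sigma^\infty$ via $t\mapsto(t^n)_n$. Then the set $(T_\Sigma^\infty)_{\mathrm{ffv}}$ of infinitary raw terms with finitely many free variables, together with the inclusion into $T_\Sigma^\infty$ and the map $(T_\Sigma^\infty)_{\mathrm{ffv}}\to UT_\alpha$ sending $t$ to the unique element of $T_\alpha$ whose projection to $F_\alpha^n1$ is $a^{(n)}(t^n)$ for all $n$, is a pullback in $\mathsf{Set}$ of $g$ and $\iota_\alpha$.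
   Context: Nominal sets over a countably infinite set $\mathcal V$ of names (sets with an action of the finite permutations of $\mathcal V$ in which every element has a finite support; $\mathsf{Nom}$ with equivariant maps; $U:\mathsf{Nom}\to\mathsf{Set}$ forgetful). $[\mathcal V]X$ is the name-abstraction of $X$ with elements $\langle x\rangle u$. Binding signature: set $\Sigma$ of symbols, each with arity a finite list $(n_1,\dots,n_k)$. $F_\alpha X=\mathcal V+\coprod_{\mathsf{op}}\prod_i[\mathcal V]^{n_i}X$, $FX=\mathcal V+\coprod_{\mathsf{op}}\prod_i(\mathcal V^{n_i}\times X)$, $q_X:FX\to F_\alpha X$ identity on $\mathcal V$ and $(x^1,\dots,x^n,u)\mapsto\langle x^1\rangle\cdots\langle x^n\rangle u$ on factors. Terminal chains $F^{n+1}1\to F^n1$ given by $F^n(!)$, likewise for $F_\alpha$; $a^{(0)}=\mathrm{id}_1$, $a^{(n+1)}=q_{F_\alpha^n1}\circ F(a^{(n)})$. $g:\lim UF^n1\to\lim UF_\alpha^n1$ is induced by the $a^{(n)}$, and $\iota_\alpha$ by the canonical cone from the final coalgebra $T_\alpha$ (which is the $\mathsf{Nom}$-limit, i.e. finitely supported compatible tuples, of the terminal chain). Raw infinitary terms $T_\Sigma^\infty$: possibly infinite trees built from variables $x\in\mathcal V$ and nodes $\mathsf{op}(\langle\overline{x_1}\rangle t_1,\dots,\langle\overline{x_k}\rangle t_k)$ with $\overline{x_i}$ a list of $n_i$ names; truncation $t^0=*$, $x^{n+1}=x$, $\mathsf{op}(\langle\overline{x_i}\rangle t_i)^{n+1}=\mathsf{op}(\langle\overline{x_i}\rangle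 t_i^n)$, so that $t^n$ is an element of $F^n1$ (with $1=\{*\}$). Free variables of finite terms as usual ($\mathsf{op}$ binds $\overline{x_i}$ in $t_i$), and $\mathsf{fv}(t)=\bigcup_n\mathsf{fv}(t^n)$; $(T_\Sigma^\infty)_{\mathrm{ffv}}=\{t:\mathsf{fv}(t)\text{ finite}\}$. *)

From Stdlib Require Import List Arith PeanoNat.
Import ListNotations.

Definition is_pullback {P A B C : Type}
  (p1 : P -> A) (p2 : P -> B) (f : A -> C) (g : B -> C) : Prop :=
  (forall x, f (p1 x) = g (p2 x)) /\
  (forall a b, f a = g b -> exists! x, p1 x = a /\ p2 x = b).

Definition V := nat.

(* V^k, a tuple of k names, first component = outermost binder *)
Fixpoint vecN (k : nat) : Type :=
  match k with 0 => unit | S k => (V * vecN k)%type end.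

Fixpoint vmap (f : V -> V) (k : nat) : vecN k -> vecN k :=
  match k with
  | 0 => fun v => v
  | S k => fun v => (f (fst v), vmap f k (snd v))
  end.

Fixpoint vIn (k : nat) : vecN k -> V -> Prop :=
  match k with
  | 0 => fun _ _ => False
  | S k => fun v x => fst v = x \/ vIn k (snd v) x
  end.

Definition swap (a b c : V) : V :=
  if Nat.eqb c a then b else if Nat.eqb c b then a else c.

Record fperm := {
  pf : V -> V;
  pg : V -> V;
  pfg : forall x, pf (pg x) = x;
  pgf : forall x, pg (pf x) = x;
  pfin : exists L : list V, forall a, ~ In a L -> pf a = a }.

Section Signature.
Variable Sig : Type.
Variable ar : Sig -> list nat.

(* prod_i (V^{n_i} x X) for the arity list l *)
Inductive Args (X : Type) : list nat -> Type :=
| ANil : Args X nil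
| ACons : forall (k : nat) (l : list nat), vecN k -> X -> Args X l -> Args X (k :: l).
Arguments ANil {X}.
Arguments ACons {X} k l _ _ _.

Fixpoint Args_map {X Y : Type} (fv : V -> V) (f : X -> Y) (l : list nat)
  (a : Args X l) : Args Y l :=
  match a in Args _ l return Args Y l with
  | ANil => ANil
  | ACons k l v x r => ACons k l (vmap fv k v) (f x) (Args_map fv f l r)
  end.

Definition FF (X : Type) : Type := (V + {op : Sig & Args X (ar op)})%type.

(* F acting on a map f (with names renamed by fv; fv = id gives F f) *)
Definition FF_map {X Y : Type} (fv : V -> V) (f : X -> Y) (t : FF X) : FF Y :=
  match t with
  | inl x => inl (fv x)
  | inr (existT _ op a) => inr (existT _ op (Args_map fv f (ar op) a))
  end.

Fixpoint Fn (n : nat) : Type :=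
  match n with 0 => unit | S n => FF (Fn n) end.

Fixpoint bang (n : nat) : Fn (S n) -> Fn n :=
  match n return Fn (S n) -> Fn n with
  | 0 => fun _ => tt
  | S n => FF_map (fun x => x) (bang n)
  end.

(* permutation action on F^n 1 (renaming of all names, bound or free) *)
Fixpoint actF (n : nat) (p : V -> V) : Fn n -> Fn n :=
  match n return Fn n -> Fn n with
  | 0 => fun t => t
  | S n => FF_map p (actF n p)
  end.

(* Equality in [V]^k (X/R), where X carries the action act and R is the
   equality of the quotient:  <a>u = <b>v  iff  for all but finitely many c,
   (a c).u = (b c).v . *)
Fixpoint abs_rel {X : Type} (R : X -> X -> Prop) (act : (V -> V) -> X -> X)
  (k : nat) : vecN k -> X -> vecN k -> X -> Prop :=
  match k return vecN k -> X -> vecN k -> X -> Prop with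
  | 0 => fun _ u _ v => R u v
  | S k => fun xs u ys v =>
      exists L : list V, forall c, ~ In c L ->
        abs_rel R act k (vmap (swap (fst xs) c) k (snd xs)) (act (swap (fst xs) c) u)
                        (vmap (swap (fst ys) c) k (snd ys)) (act (swap (fst ys) c) v)
  end.

Definition ahd {X : Type} {k : nat} {l : list nat} (a : Args X (k :: l)) : (vecN k * X)%type :=
  match a in Args _ l0 return
        match l0 with nil => unit | k0 :: _ => (vecN k0 * X)%type end with
  | ANil => tt
  | ACons _ _ v x _ => (v, x)
  end.

Definition atl {X : Type} {k : nat} {l : list nat} (a : Args X (k :: l)) : Args X l :=
  match a in Args _ l0 return
        match l0 with nil => unit | _ :: l1 => Args X l1 end with
  | ANil => tt
  | ACons _ _ _ _ r => r
  end.

Fixpoint Args_rel {X : Type} (R : X -> X -> Prop) (act : (V -> V) -> X -> X)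
  (l : list nat) : Args X l -> Args X l -> Prop :=
  match l return Args X l -> Args X l -> Prop with
  | nil => fun _ _ => True
  | k :: l => fun a b =>
      abs_rel R act k (fst (ahd a)) (snd (ahd a)) (fst (ahd b)) (snd (ahd b))
      /\ Args_rel R act l (atl a) (atl b)
  end.

(* kernel of F applied to the quotient map X -> X/R *)
Definition FF_rel {X : Type} (R : X -> X -> Prop) (act : (V -> V) -> X -> X)
  (t s : FF X) : Prop :=
  match t, s with
  | inl x, inl y => x = y
  | inr (existT _ o1 a1), inr (existT _ o2 a2) =>
      exists e : o1 = o2,
        Args_rel R act (ar o2) (eq_rect o1 (fun o => Args X (ar o)) a1 o2 e) a2
  | _, _ => False
  end.

(* alpha n = kernel of a^(n) : F^n 1 -> F_alpha^n 1, where
   a^(0) = id_1, a^(n+1) = q o F(a^(n)) *)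
Fixpoint alpha (n : nat) : Fn n -> Fn n -> Prop :=
  match n return Fn n -> Fn n -> Prop with
  | 0 => fun _ _ => True
  | S n => FF_rel (alpha n) (actF n)
  end.

(* F_alpha^n 1, realised as the quotient F^n 1 / ker a^(n) (a^(n) is onto):
   elements are the equivalence classes *)
Definition Fa (n : nat) : Type :=
  { P : Fn n -> Prop | exists t, P = alpha n t }.

Definition cls (n : nat) (t : Fn n) : Fa n :=
  exist _ (alpha n t) (ex_intro _ t eq_refl).

Definition bangA (n : nat) (P : Fn (S n) -> Prop) : Fn n -> Prop :=
  fun s => exists t, P t /\ alpha n (bang n t) s.

Definition pact (n : nat) (p : fperm) (P : Fn n -> Prop) : Fn n -> Prop :=
  fun t => P (actF n (pg p) t).

(* T_alpha: the Nom-limit of the terminal chain of F_alpha, i.e. the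
   finitely supported compatible tuples *)
Definition compatA (x : forall n, Fa n) : Prop :=
  forall n, proj1_sig (x n) = bangA n (proj1_sig (x (S n))).

Definition fsuppA (x : forall n, Fa n) : Prop :=
  exists A : list V, forall p : fperm, (forall a, In a A -> pf p a = a) ->
    forall n, pact n p (proj1_sig (x n)) = proj1_sig (x n).

Definition Talpha : Type := { x : forall n, Fa n | compatA x /\ fsuppA x }.

(* iota_alpha : U T_alpha -> lim_n U F_alpha^n 1 (valued in prod_n U F_alpha^n 1) *)
Definition iotaA (u : Talpha) : forall n, Fa n := proj1_sig u.

CoInductive Tinf : Type :=
| TVar : V -> Tinf
| TOp : forall op : Sig, Args Tinf (ar op) -> Tinf.

Fixpoint trunc (n : nat) (t : Tinf) : Fn n :=
  match n return Fn n with
  | 0 => tt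
  | S n => match t with
           | TVar x => inl x
           | TOp op a => inr (existT _ op (Args_map (fun x => x) (trunc n) (ar op) a))
           end
  end.

Fixpoint Args_fv {X : Type} (fvX : X -> V -> Prop) (l : list nat) :
  Args X l -> V -> Prop :=
  match l return Args X l -> V -> Prop with
  | nil => fun _ _ => False
  | k :: l => fun a x =>
      (fvX (snd (ahd a)) x /\ ~ vIn k (fst (ahd a)) x) \/ Args_fv fvX l (atl a) x
  end.

Fixpoint fvF (n : nat) : Fn n -> V -> Prop :=
  match n return Fn n -> V -> Prop with
  | 0 => fun _ _ => False
  | S n => fun t x =>
      match t with
      | inl y => y = x
      | inr (existT _ op a) => Args_fv (fvF n) (ar op) a x
      end
  end.

Definition fvT (t : Tinf) (x : V) : Prop := exists n, fvF n (trunc n t) x.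

Definition Tffv : Type := { t : Tinf | exists L : list V, forall x, fvT t x -> In x L }.

(* g composed with the identification T^infty = lim_n U F^n 1, t |-> (t^n)_n *)
Definition gT (t : Tinf) : forall n, Fa n := fun n => cls n (trunc n t).

End Signature.

(* The levels F_alpha^n 1 are modelled as quotients of F^n 1 by the kernel
   alpha_n of a^(n), so the heart of the proof is a uniform account of
   alpha-equivalence.  We axiomatise "nominal setoids": types with a renaming
   action, an equivalence and a free-name predicate such that renaming by a
   finite bijection that fixes the free names of u yields something
   equivalent to u.  These axioms are closed under unit, products, name
   abstraction and hence under the functor F, so every level F^n 1 with
   alpha_n satisfies them.  Two consequences drive the theorem:
   - if every free name of t is fixed by a permutation p, then p fixes the
     class [t^n]; so t with finitely many free names yields a finitely
     supported compatible tuple, i.e. an element of T_alpha;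
   - if a name x is free in t^n and c is fresh, then swapping x and c moves
     the class [t^n]; so a support of (g t) contains every free name of t.
   The pullback property then follows: the square commutes by construction,
   and any t with g t in the image of iota_alpha has finitely many free
   names, the mediating map being unique because both legs are injective. *)

From Stdlib Require Import List Arith PeanoNat Lia.
From Stdlib Require Import FunctionalExtensionality PropExtensionality ProofIrrelevance.
Import ListNotations.

Lemma fresh_name (L : list V) : exists c, ~ In c L.
Proof.
  exists (S (fold_right plus 0 L)).
  assert (Hbound : forall y, In y L -> y <= fold_right plus 0 L).
  { induction L as [|a L IHL]; simpl; intros y Hy; [contradiction|].
    destruct Hy as [->|Hy]; [lia|]. specialize (IHL y Hy); lia. }
  intro Hin. specialize (Hbound _ Hin). lia.
Qed.

Lemma swap_involutive a b x : swap a b (swap a b x) = x.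
Proof.
  unfold swap.
  destruct (Nat.eqb_spec x a) as [->|Hxa].
  - destruct (Nat.eqb_spec b a) as [->|Hba]; [auto|]. rewrite Nat.eqb_refl; auto.
  - destruct (Nat.eqb_spec x b) as [->|Hxb].
    + rewrite Nat.eqb_refl; auto.
    + destruct (Nat.eqb_spec x a); [congruence|]. destruct (Nat.eqb_spec x b); congruence.
Qed.

Lemma swap_left a b : swap a b a = b.
Proof. unfold swap; rewrite Nat.eqb_refl; auto. Qed.

Lemma swap_right a b : swap a b b = a.
Proof. unfold swap; destruct (Nat.eqb_spec b a); subst; auto; rewrite Nat.eqb_refl; auto. Qed.

Lemma swap_other a b x : x <> a -> x <> b -> swap a b x = x.
Proof. unfold swap; intros; destruct (Nat.eqb_spec x a); destruct (Nat.eqb_spec x b); congruence. Qed.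

Definition inverses (q qi : V -> V) : Prop :=
  (forall x, q (qi x) = x) /\ (forall x, qi (q x) = x).

Definition finite_support (q : V -> V) : Prop :=
  exists L, forall a, ~ In a L -> q a = a.

Lemma inverses_inj q qi x y : inverses q qi -> q x = q y -> x = y.
Proof. intros [_ H] E. rewrite <- (H x), <- (H y), E; auto. Qed.

Lemma inverses_sym q qi : inverses q qi -> inverses qi q.
Proof. intros [H1 H2]; split; auto. Qed.

Lemma inverses_swap a b : inverses (swap a b) (swap a b).
Proof. split; intro; apply swap_involutive. Qed.

Lemma swap_conjugate q qi x d a :
  inverses q qi -> q (swap x d a) = swap (q x) (q d) (q a).
Proof.
  intros B.
  destruct (Nat.eq_dec a x) as [->|Hax]; [rewrite !swap_left; auto|].
  destruct (Nat.eq_dec a d) as [->|Had]; [rewrite !swap_right; auto|].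
  rewrite !swap_other; auto; intro E; apply (inverses_inj q qi) in E; auto.
Qed.

Record NomSetoid := mkNomSetoid {
  carrier : Type;
  rename : (V -> V) -> carrier -> carrier;
  aeq : carrier -> carrier -> Prop;
  free : carrier -> V -> Prop }.

(* The decisive one, [aeq_fixing_free], says
   that renaming by a finite bijection fixing the free names of u does not
   change u up to equivalence; reflexivity is its special case q = id. *)
Record Lawful (N : NomSetoid) : Prop := {
  rename_ext : forall p q u, (forall a, p a = q a) -> rename N p u = rename N q u;
  rename_comp : forall p q u, rename N p (rename N q u) = rename N (fun a => p (q a)) u;
  rename_id : forall u, rename N (fun a => a) u = u;
  aeq_sym : forall u v, aeq N u v -> aeq N v u;
  aeq_trans : forall u v w, aeq N u v -> aeq N v w -> aeq N u w;
  aeq_rename : forall q qi u v, inverses q qi -> aeq N u v ->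
    aeq N (rename N q u) (rename N q v);
  free_aeq : forall u v x, aeq N u v -> free N u x -> free N v x;
  free_rename : forall q qi u x, inverses q qi -> free N u x -> free N (rename N q u) (q x);
  free_finite : forall u, exists L, forall x, free N u x -> In x L;
  aeq_fixing_free : forall q qi u, inverses q qi -> finite_support q ->
    (forall x, free N u x -> q x = x) -> aeq N u (rename N q u) }.

Section LawfulFacts.
Variable N : NomSetoid.
Hypothesis HN : Lawful N.

Lemma aeq_refl u : aeq N u u.
Proof.
  pose proof (aeq_fixing_free N HN (fun a => a) (fun a => a) u) as H.
  rewrite (rename_id N HN) in H. apply H; auto.
  - split; auto.
  - exists nil; auto.
Qed.

Lemma free_unrename q qi u y : inverses q qi -> free N (rename N q u) y -> free N u (qi y).
Proof.
  intros B H. pose proof (free_rename N HN qi q _ _ (inverses_sym _ _ B) H) as H2.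
  rewrite (rename_comp N HN), (rename_ext N HN _ (fun a => a)), (rename_id N HN) in H2
    by (intro; apply B).
  exact H2.
Qed.

(* A permutation fixing the free names of u fixes the equivalence class of u
   (the class is [aeq N u], and p acts on it by precomposition with p^-1). *)
Lemma class_fixed (p : fperm) u :
  (forall x, free N u x -> pf p x = x) ->
  forall s, aeq N u (rename N (pg p) s) <-> aeq N u s.
Proof.
  intros Hfix s.
  assert (B : inverses (pf p) (pg p)) by (split; [apply pfg|apply pgf]).
  assert (Fp : finite_support (pf p)) by apply pfin.
  assert (Fpi : finite_support (pg p)).
  { destruct (pfin p) as [L HL]. exists L. intros a Ha.
    rewrite <- (HL a Ha) at 1. apply pgf. }
  assert (Hfix' : forall x, free N u x -> pg p x = x).
  { intros x Hx. rewrite <- (Hfix x Hx) at 1. apply pgf. }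
  split; intro H.
  - apply (aeq_rename N HN (pf p) (pg p)) in H; auto.
    rewrite (rename_comp N HN),
      (rename_ext N HN (fun a => pf p (pg p a)) (fun a => a)), (rename_id N HN) in H
      by (intro; apply pfg).
    eapply (aeq_trans N HN); [|exact H]. apply (aeq_fixing_free N HN _ (pg p)); auto.
  - apply (aeq_rename N HN (pg p) (pf p)) in H; [|apply inverses_sym; auto].
    eapply (aeq_trans N HN); [|exact H]. apply (aeq_fixing_free N HN _ (pf p)); auto.
    apply inverses_sym; auto.
Qed.

Lemma swap_moves_free u x c :
  ~ free N u c -> aeq N u (rename N (swap x c) u) -> ~ free N u x.
Proof.
  intros Hc Heq Hx. apply Hc.
  pose proof (free_rename N HN _ _ _ _ (inverses_swap x c) Hx) as H.
  rewrite swap_left in H. exact (free_aeq N HN _ _ _ (aeq_sym N HN _ _ Heq) H).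
Qed.

End LawfulFacts.

Lemma lawful_transport (N' N : NomSetoid) (phi : carrier N' -> carrier N)
  (psi : carrier N -> carrier N') :
  (forall a, psi (phi a) = a) ->
  (forall p a, phi (rename N' p a) = rename N p (phi a)) ->
  (forall a b, aeq N' a b <-> aeq N (phi a) (phi b)) ->
  (forall a z, free N' a z <-> free N (phi a) z) ->
  Lawful N -> Lawful N'.
Proof.
  intros Hret Hact Hrel Hfree G.
  assert (Hinj : forall a b, phi a = phi b -> a = b).
  { intros a b E. rewrite <- (Hret a), <- (Hret b), E; auto. }
  constructor.
  - intros p q u E. apply Hinj. rewrite !Hact. apply (rename_ext N G); auto.
  - intros p q u. apply Hinj. rewrite !Hact. apply (rename_comp N G).
  - intros u. apply Hinj. rewrite !Hact. apply (rename_id N G).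
  - intros u v. rewrite !Hrel. apply (aeq_sym N G).
  - intros u v w. rewrite !Hrel. apply (aeq_trans N G).
  - intros q qi u v B. rewrite !Hrel, !Hact. apply (aeq_rename N G _ qi); auto.
  - intros u v x. rewrite Hrel, !Hfree. apply (free_aeq N G).
  - intros q qi u x B. rewrite !Hfree, Hact. apply (free_rename N G _ qi); auto.
  - intros u. destruct (free_finite N G (phi u)) as [L HL].
    exists L. intros x. rewrite Hfree. auto.
  - intros q qi u B F HF. rewrite Hrel, Hact. apply (aeq_fixing_free N G _ qi); auto.
    intros x. rewrite <- Hfree. auto.
Qed.

Definition unitN : NomSetoid :=
  mkNomSetoid unit (fun _ t => t) (fun _ _ => True) (fun _ _ => False).

Lemma unitN_lawful : Lawful unitN.
Proof. constructor; simpl; auto; try tauto; intros; exists nil; tauto. Qed.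

Definition prodN (A B : NomSetoid) : NomSetoid := mkNomSetoid (carrier A * carrier B)%type
  (fun p a => (rename A p (fst a), rename B p (snd a)))
  (fun a b => aeq A (fst a) (fst b) /\ aeq B (snd a) (snd b))
  (fun a z => free A (fst a) z \/ free B (snd a) z).

Lemma prodN_lawful A B : Lawful A -> Lawful B -> Lawful (prodN A B).
Proof.
  intros GA GB. constructor; simpl.
  - intros p q [u v] E; simpl. rewrite (rename_ext A GA p q), (rename_ext B GB p q); auto.
  - intros p q [u v]; simpl. rewrite (rename_comp A GA), (rename_comp B GB); auto.
  - intros [u v]; simpl. rewrite (rename_id A GA), (rename_id B GB); auto.
  - intros [u v] [u' v'] [H1 H2]; split; [apply (aeq_sym A GA)|apply (aeq_sym B GB)]; auto.
  - intros [u v] [u' v'] [u'' v''] [H1 H2] [H3 H4]; split;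
      [eapply (aeq_trans A GA)|eapply (aeq_trans B GB)]; eauto.
  - intros q qi [u v] [u' v'] Bq [H1 H2]; split;
      [apply (aeq_rename A GA _ qi)|apply (aeq_rename B GB _ qi)]; auto.
  - intros [u v] [u' v'] x [H1 H2] [H|H];
      [left; eapply (free_aeq A GA)|right; eapply (free_aeq B GB)]; eauto.
  - intros q qi [u v] x Bq [H|H];
      [left; apply (free_rename A GA _ qi)|right; apply (free_rename B GB _ qi)]; auto.
  - intros [u v]. destruct (free_finite A GA u) as [L1 H1].
    destruct (free_finite B GB v) as [L2 H2].
    exists (L1 ++ L2). intros x [H|H]; apply in_or_app; auto.
  - intros q qi [u v] Bq F HF; simpl in *; split;
      [apply (aeq_fixing_free A GA _ qi)|apply (aeq_fixing_free B GB _ qi)]; auto.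
Qed.

Definition absN (Y : NomSetoid) : NomSetoid := mkNomSetoid (V * carrier Y)%type
  (fun p a => (p (fst a), rename Y p (snd a)))
  (fun a b => exists L : list V, forall c, ~ In c L ->
     aeq Y (rename Y (swap (fst a) c) (snd a)) (rename Y (swap (fst b) c) (snd b)))
  (fun a z => free Y (snd a) z /\ fst a <> z).

Section Abstraction.
Variable Y : NomSetoid.
Hypothesis HY : Lawful Y.

Lemma rename_after_swap q qi x c u : inverses q qi ->
  rename Y q (rename Y (swap x (qi c)) u) = rename Y (swap (q x) c) (rename Y q u).
Proof.
  intros B. rewrite !(rename_comp Y HY). apply (rename_ext Y HY). intro a.
  rewrite (swap_conjugate q qi) by auto. destruct B as [B1 _]. rewrite B1; auto.
Qed.

Lemma absN_aeq_rename q qi a b : inverses q qi -> aeq (absN Y) a b ->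
  aeq (absN Y) (rename (absN Y) q a) (rename (absN Y) q b).
Proof.
  destruct a as [x u], b as [y v]; intros B [L H]; simpl in *.
  exists (map q L). intros c Hc.
  assert (Hd : ~ In (qi c) L).
  { intro Hin. apply Hc. replace c with (q (qi c)) by apply B. apply in_map; auto. }
  rewrite <- !(rename_after_swap q qi) by auto.
  exact (aeq_rename Y HY q qi _ _ B (H _ Hd)).
Qed.

Lemma absN_free_aeq a b z : aeq (absN Y) a b -> free (absN Y) a z -> free (absN Y) b z.
Proof.
  destruct a as [x u], b as [y v]; intros [L H] [Hz Hxz]; simpl in *.
  destruct (free_finite Y HY v) as [Lv HLv].
  destruct (fresh_name (z :: x :: y :: L ++ Lv)) as [c Hc].
  simpl in Hc. rewrite !in_app_iff in Hc.
  assert (Hu : free Y (rename Y (swap x c) u) z).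
  { rewrite <- (swap_other x c z) by (intro; subst; tauto).
    apply (free_rename Y HY _ (swap x c)); auto. apply inverses_swap. }
  apply (free_aeq Y HY _ _ _ (H c ltac:(tauto))) in Hu.
  apply (free_unrename Y HY _ (swap y c)) in Hu; [|apply inverses_swap].
  destruct (Nat.eq_dec z y) as [->|Hzy].
  - rewrite swap_left in Hu. apply HLv in Hu. tauto.
  - rewrite swap_other in Hu by (intro; subst; tauto). split; auto.
Qed.

(* The conjugate (q x  c) o q o (x c) of a finite bijection q fixing the
   free names of <x>u, for c fresh, fixes the free names of (x c).u; this is
   why <x>u ~ <q x>(q.u). *)
Lemma absN_aeq_fixing_free q qi a : inverses q qi -> finite_support q ->
  (forall z, free (absN Y) a z -> q z = z) -> aeq (absN Y) a (rename (absN Y) q a).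
Proof.
  destruct a as [x u]; intros B [Ls HLs] HF; simpl in *.
  destruct (free_finite Y HY u) as [Lu HLu].
  exists (x :: q x :: Ls ++ Lu). intros c Hc. simpl in Hc. rewrite in_app_iff in Hc.
  set (q' := fun a => swap (q x) c (q (swap x c a))).
  set (qi' := fun a => swap x c (qi (swap (q x) c a))).
  assert (Bq : inverses q' qi').
  { destruct B as [B1 B2]; split; intro a; unfold q', qi';
      rewrite ?swap_involutive, ?B1, ?B2, ?swap_involutive; auto. }
  assert (Fq : finite_support q').
  { exists (x :: c :: q x :: Ls). intros a Ha. simpl in Ha. unfold q'.
    rewrite (swap_other x c a) by (intro; subst; tauto). rewrite (HLs a) by tauto.
    apply swap_other; intro; subst; tauto. }
  assert (Hq' : rename Y q' (rename Y (swap x c) u) = rename Y (swap (q x) c) (rename Y q u)).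
  { rewrite !(rename_comp Y HY). apply (rename_ext Y HY). intro a.
    unfold q'. rewrite swap_involutive; auto. }
  rewrite <- Hq'. apply (aeq_fixing_free Y HY q' qi'); auto.
  intros w Hw. apply (free_unrename Y HY _ (swap x c)) in Hw; [|apply inverses_swap].
  unfold q'. destruct (Nat.eq_dec (swap x c w) x) as [E|E].
  - assert (Ew : w = c) by (rewrite <- (swap_involutive x c w), E, swap_left; auto).
    subst w. rewrite swap_right, swap_left. auto.
  - assert (Hq : q (swap x c w) = swap x c w) by (apply HF; split; auto).
    assert (Hwc : swap x c w <> c) by (intro E2; rewrite E2 in Hw; apply HLu in Hw; tauto).
    assert (Hw2 : w = swap x c w).
    { rewrite <- (swap_involutive x c w) at 1. apply swap_other; auto. }
    rewrite <- Hw2 in Hq, Hwc, E |- *. rewrite Hq. apply swap_other; auto.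
    intro E3. rewrite <- Hq in E3. apply (inverses_inj q qi) in E3; auto.
Qed.

Lemma absN_lawful : Lawful (absN Y).
Proof.
  constructor.
  - intros p q [x u] E; simpl. rewrite E, (rename_ext Y HY p q); auto.
  - intros p q [x u]; simpl. rewrite (rename_comp Y HY); auto.
  - intros [x u]; simpl. rewrite (rename_id Y HY); auto.
  - intros [x u] [y v] [L H]; exists L; intros c Hc; apply (aeq_sym Y HY); auto.
  - intros [x u] [y v] [z w] [L1 H1] [L2 H2]; exists (L1 ++ L2); intros c Hc.
    rewrite in_app_iff in Hc. eapply (aeq_trans Y HY); [apply H1|apply H2]; tauto.
  - exact absN_aeq_rename.
  - exact absN_free_aeq.
  - intros q qi [x u] z B [H1 H2]; simpl in *. split.
    + apply (free_rename Y HY _ qi); auto.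
    + intro E. apply (inverses_inj q qi) in E; auto.
  - intros [x u]. destruct (free_finite Y HY u) as [L HL]. exists L. intros z [Hz _]; auto.
  - exact absN_aeq_fixing_free.
Qed.

End Abstraction.

Lemma vmap_ext f g k v : (forall a, f a = g a) -> vmap f k v = vmap g k v.
Proof. intro E; induction k; simpl; auto. destruct v; simpl; rewrite E, IHk; auto. Qed.

Lemma vmap_comp f g k v : vmap f k (vmap g k v) = vmap (fun a => f (g a)) k v.
Proof. induction k; simpl; auto. destruct v; simpl; rewrite IHk; auto. Qed.

Lemma vmap_id k v : vmap (fun a => a) k v = v.
Proof. induction k; simpl; auto. destruct v; simpl; rewrite IHk; auto. Qed.

Definition absListN (k : nat) (N : NomSetoid) : NomSetoid :=
  mkNomSetoid (vecN k * carrier N)%type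
  (fun p a => (vmap p k (fst a), rename N p (snd a)))
  (fun a b => abs_rel (aeq N) (rename N) k (fst a) (snd a) (fst b) (snd b))
  (fun a z => free N (snd a) z /\ ~ vIn k (fst a) z).

(* [V]^(k+1) N is [V]([V]^k N), up to reassociating the tuple. *)
Lemma absListN_lawful k N : Lawful N -> Lawful (absListN k N).
Proof.
  intro G. induction k.
  - apply (lawful_transport (absListN 0 N) N snd (fun u => (tt, u))); simpl; try tauto.
    intros [[] u]; auto.
  - apply (lawful_transport (absListN (S k) N) (absN (absListN k N))
      (fun a => (fst (fst a), (snd (fst a), snd a)))
      (fun b => ((fst b, fst (snd b)), snd (snd b)))).
    + intros [[x xs] u]; auto.
    + intros p [[x xs] u]; auto.
    + intros [[x xs] u] [[y ys] v]; simpl. tauto.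
    + intros [[x xs] u] z; simpl. tauto.
    + apply absN_lawful; auto.
Qed.

Definition argsN (N : NomSetoid) (l : list nat) : NomSetoid := mkNomSetoid (Args (carrier N) l)
  (fun p a => Args_map p (rename N p) l a)
  (Args_rel (aeq N) (rename N) l)
  (Args_fv (free N) l).

Lemma Args_eta_gen X l (a : Args X l) :
  match l return Args X l -> Prop with
  | nil => fun a => a = ANil X
  | k :: l' => fun a => a = ACons X k l' (fst (ahd a)) (snd (ahd a)) (atl a)
  end a.
Proof. destruct a; reflexivity. Qed.

Lemma Args_eta_cons X k l (a : Args X (k :: l)) :
  a = ACons X k l (fst (ahd a)) (snd (ahd a)) (atl a).
Proof. exact (Args_eta_gen X (k :: l) a). Qed.

Lemma Args_eta_nil X (a : Args X nil) : a = ANil X.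
Proof. exact (Args_eta_gen X nil a). Qed.

(* Argument lists are iterated products of abstractions. *)
Lemma argsN_lawful N l : Lawful N -> Lawful (argsN N l).
Proof.
  intro G. induction l as [|k l IH].
  - apply (lawful_transport (argsN N nil) unitN (fun _ => tt) (fun _ => ANil _));
      simpl; try tauto.
    + intro a; rewrite (Args_eta_nil _ a); auto.
    + apply unitN_lawful.
  - apply (lawful_transport (argsN N (k :: l)) (prodN (absListN k N) (argsN N l))
      (fun a => (ahd a, atl a))
      (fun b => ACons _ k l (fst (fst b)) (snd (fst b)) (snd b))).
    + intro a; symmetry; exact (Args_eta_cons _ _ _ a).
    + intros p a. rewrite (Args_eta_cons _ _ _ a). simpl. auto.
    + intros a b. simpl. tauto.
    + intros a z. simpl. tauto.
    + apply prodN_lawful; [apply absListN_lawful|]; auto.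
Qed.

Section Levels.
Variable Sig : Type.
Variable ar : Sig -> list nat.

(* The functor F on nominal setoids: its equivalence is the kernel of
   q o F(quotient map), i.e. F_alpha applied to the quotient. *)
Definition FN (N : NomSetoid) : NomSetoid := mkNomSetoid (FF Sig ar (carrier N))
  (fun p t => FF_map Sig ar p (rename N p) t)
  (FF_rel Sig ar (aeq N) (rename N))
  (fun t x => match t with
      | inl y => y = x
      | inr (existT _ op a) => Args_fv (free N) (ar op) a x
      end).

Lemma FN_lawful N : Lawful N -> Lawful (FN N).
Proof.
  intro G. pose proof (fun op => argsN_lawful N (ar op) G) as GA.
  constructor; simpl.
  - intros p q [x|[o a]] E; simpl; [rewrite E; auto|].
    f_equal; f_equal; exact (rename_ext _ (GA o) p q a E).
  - intros p q [x|[o a]]; simpl; auto. f_equal; f_equal; exact (rename_comp _ (GA o) p q a).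
  - intros [x|[o a]]; simpl; auto. f_equal; f_equal; exact (rename_id _ (GA o) a).
  - intros [x|[o a]] [y|[o' b]]; simpl; auto; try tauto.
    intros [e H]. subst o'. exists eq_refl. simpl in *. apply (aeq_sym _ (GA o)); auto.
  - intros [x|[o a]] [y|[o' b]] [z|[o'' c]]; simpl; try tauto; try congruence.
    intros [e H] [e' H']. subst o' o''. exists eq_refl. simpl in *.
    eapply (aeq_trans _ (GA o)); eauto.
  - intros q qi [x|[o a]] [y|[o' b]] B; simpl; try tauto; try congruence.
    intros [e H]. subst o'. exists eq_refl. simpl in *. apply (aeq_rename _ (GA o) _ qi); auto.
  - intros [x|[o a]] [y|[o' b]] z; simpl; try tauto; try congruence.
    intros [e H]. subst o'. simpl in *. apply (free_aeq _ (GA o)); auto.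
  - intros q qi [x|[o a]] z B; simpl; try congruence.
    apply (free_rename _ (GA o) _ qi); auto.
  - intros [x|[o a]].
    + exists [x]; simpl; auto.
    + destruct (free_finite _ (GA o) a) as [L HL]. exists L; auto.
  - intros q qi [x|[o a]] B F HF; simpl in *.
    + symmetry; auto.
    + exists eq_refl. simpl. apply (aeq_fixing_free _ (GA o) _ qi); auto.
Qed.

Definition level (n : nat) : NomSetoid :=
  mkNomSetoid (Fn Sig ar n) (actF Sig ar n) (alpha Sig ar n) (fvF Sig ar n).

Lemma level_lawful n : Lawful (level n).
Proof.
  induction n.
  - exact unitN_lawful.
  - exact (FN_lawful _ IHn).
Qed.

End Levels.

Lemma Args_map_comp {X Y Z : Type} f1 (g1 : Y -> Z) f2 (g2 : X -> Y) l a :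
  Args_map f1 g1 l (Args_map f2 g2 l a)
  = Args_map (fun x => f1 (f2 x)) (fun x => g1 (g2 x)) l a.
Proof. induction a; simpl; auto. rewrite vmap_comp, IHa; auto. Qed.

Lemma Args_map_ext {X Y : Type} f1 f2 (g1 g2 : X -> Y) l a :
  (forall x, f1 x = f2 x) -> (forall x, g1 x = g2 x) ->
  Args_map f1 g1 l a = Args_map f2 g2 l a.
Proof. intros E1 E2; induction a; simpl; auto. rewrite (vmap_ext f1 f2), E2, IHa; auto. Qed.

Lemma abs_rel_map {X Y : Type} (R : X -> X -> Prop) (R' : Y -> Y -> Prop) act act'
  (f : X -> Y) :
  (forall a b, R a b -> R' (f a) (f b)) -> (forall p a, f (act p a) = act' p (f a)) ->
  forall k xs u ys v, abs_rel R act k xs u ys v -> abs_rel R' act' k xs (f u) ys (f v).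
Proof.
  intros HR Ha k; induction k; simpl; intros xs u ys v H; auto.
  destruct H as [L H]. exists L. intros c Hc. rewrite <- !Ha. apply IHk; auto.
Qed.

Lemma Args_rel_map {X Y : Type} (R : X -> X -> Prop) (R' : Y -> Y -> Prop) act act'
  (f : X -> Y) :
  (forall a b, R a b -> R' (f a) (f b)) -> (forall p a, f (act p a) = act' p (f a)) ->
  forall l a b, Args_rel R act l a b ->
   Args_rel R' act' l (Args_map (fun x => x) f l a) (Args_map (fun x => x) f l b).
Proof.
  intros HR Ha l; induction l as [|k l IHl]; simpl; intros a b H; auto.
  rewrite (Args_eta_cons _ _ _ a), (Args_eta_cons _ _ _ b). simpl. rewrite !vmap_id.
  destruct H; split; [apply abs_rel_map with R act|apply IHl]; auto.
Qed.

Definition swap_perm (x c : V) : fperm.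
Proof.
  refine {| pf := swap x c; pg := swap x c;
            pfg := swap_involutive x c; pgf := swap_involutive x c |}.
  exists [x; c]. intros a Ha. apply swap_other; intro; subst; simpl in Ha; tauto.
Defined.

Section Terms.
Variable Sig : Type.
Variable ar : Sig -> list nat.

Lemma bang_actF n p t :
  bang Sig ar n (actF Sig ar (S n) p t) = actF Sig ar n p (bang Sig ar n t).
Proof.
  revert t; induction n; intro t; simpl; auto.
  destruct t as [x|[o a]]; simpl; auto.
  rewrite !Args_map_comp. f_equal. f_equal. apply Args_map_ext; auto.
Qed.

Lemma bang_alpha n u v :
  alpha Sig ar (S n) u v -> alpha Sig ar n (bang Sig ar n u) (bang Sig ar n v).
Proof.
  revert u v; induction n; simpl; intros u v H; auto.
  destruct u as [x|[o a]], v as [y|[o' b]]; simpl in *; auto; try tauto.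
  destruct H as [e H]. subst o'. exists eq_refl. simpl in *.
  apply (Args_rel_map (alpha Sig ar (S n)) (alpha Sig ar n)
           (actF Sig ar (S n)) (actF Sig ar n)); auto.
  intros; apply bang_actF.
Qed.

Lemma bang_trunc n t : bang Sig ar n (trunc Sig ar (S n) t) = trunc Sig ar n t.
Proof.
  revert t; induction n; intro t; simpl; auto.
  destruct t as [x|o a]; simpl; auto.
  rewrite Args_map_comp. f_equal. f_equal. apply Args_map_ext; auto.
Qed.

Lemma gT_compatible t : compatA Sig ar (gT Sig ar t).
Proof.
  intro n. unfold gT, cls, bangA; cbn [proj1_sig].
  apply functional_extensionality; intro s. apply propositional_extensionality. split.
  - intro H. exists (trunc Sig ar (S n) t). split.
    + exact (aeq_refl (level Sig ar (S n)) (level_lawful Sig ar (S n)) _).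
    + rewrite bang_trunc; auto.
  - intros [t' [H1 H2]]. apply bang_alpha in H1. rewrite bang_trunc in H1.
    exact (aeq_trans _ (level_lawful Sig ar n) _ _ _ H1 H2).
Qed.

Lemma gT_supported t L :
  (forall x, fvT Sig ar t x -> In x L) -> fsuppA Sig ar (gT Sig ar t).
Proof.
  intro HL. exists L. intros p Hp n. unfold gT, cls, pact; cbn [proj1_sig].
  apply functional_extensionality; intro s. apply propositional_extensionality.
  apply (class_fixed (level Sig ar n) (level_lawful Sig ar n)).
  intros x Hx. apply Hp, HL. exists n; auto.
Qed.

(* Conversely, any support of the tuple of classes contains every free name
   of t: a free name x of t^n outside the support could be swapped with a
   fresh c without moving the class [t^n]. *)
Lemma support_contains_free t (A : list V) :
  (forall p : fperm, (forall a, In a A -> pf p a = a) ->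
    forall n, pact Sig ar n p (proj1_sig (gT Sig ar t n)) = proj1_sig (gT Sig ar t n)) ->
  forall x, fvT Sig ar t x -> In x A.
Proof.
  intros HA x [n Hx]. destruct (in_dec Nat.eq_dec x A) as [|HxA]; auto. exfalso.
  set (T := trunc Sig ar n t) in Hx.
  set (N := level Sig ar n). pose proof (level_lawful Sig ar n : Lawful N) as G.
  destruct (free_finite N G T) as [L HL].
  destruct (fresh_name (x :: A ++ L)) as [c Hc]. simpl in Hc. rewrite in_app_iff in Hc.
  assert (Hfix : forall a, In a A -> pf (swap_perm x c) a = a).
  { intros a Ha. apply swap_other; intro; subst; tauto. }
  (* The class [T] is fixed by (x c); evaluate both sides at (x c).T. *)
  pose proof (f_equal (fun P => P (actF Sig ar n (swap x c) T)) (HA _ Hfix n)) as E.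
  change (aeq N T (rename N (swap x c) (rename N (swap x c) T))
          = aeq N T (rename N (swap x c) T)) in E.
  rewrite (rename_comp N G), (rename_ext N G _ (fun a => a)), (rename_id N G) in E
    by (intro; apply swap_involutive).
  apply (swap_moves_free N G T x c); auto.
  - intro Hcf. apply HL in Hcf. tauto.
  - rewrite <- E. apply (aeq_refl N G).
Qed.

Definition embedA (s : Tffv Sig ar) : Talpha Sig ar :=
  exist (fun x => compatA Sig ar x /\ fsuppA Sig ar x) (gT Sig ar (proj1_sig s))
    (conj (gT_compatible (proj1_sig s))
          (let (L, HL) := proj2_sig s in gT_supported (proj1_sig s) L HL)).

End Terms.

Theorem proposition5p17 (S : Type) (ar : S -> list nat)
  (Hcount : exists e : S -> nat, forall o1 o2, e o1 = e o2 -> o1 = o2) :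
  exists h : Tffv S ar -> Talpha S ar,
    (forall s n, proj1_sig (h s) n = cls S ar n (trunc S ar n (proj1_sig s))) /\
    is_pullback (@proj1_sig _ _) h (gT S ar) (iotaA S ar).
Proof.
  exists (embedA S ar). split; [reflexivity|]. split; [reflexivity|].
  intros t [x [Hcompat [A HA]]] Ht. unfold iotaA in Ht; cbn [proj1_sig] in Ht. subst x.
  (* g t lies in T_alpha, so t has finitely many free names. *)
  exists (exist _ t (ex_intro _ A (support_contains_free S ar t A HA))). split.
  - split; [reflexivity|].
    unfold embedA; cbn [proj1_sig]. f_equal. apply proof_irrelevance.
  - intros [t' Ht'] [E _]. cbn [proj1_sig] in E. subst t'. f_equal. apply proof_irrelevance.
Qed.
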